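(* Let $p$ be an odd prime, and let $q$ denote the smallest prime greater than $p/2$. Write $p=p_n$, where $p_k$ denotes the $k$-th prime, and let $p_{n+1}$ be the next prime after $p$. Then the following two conditions are equivalent: (1) all the integers $\frac{p+1}{2},\frac{p+3}{2},\dots,\frac{p_{n+1}-1}{2}$ are composite; (2) the open interval $(p,\,2q)$ contains a prime.
   Context: $p_k$ denotes the $k$-th prime ($p_1=2$, $p_2=3,\dots$). Since $p/2$ is not an integer, the smallest prime $q$ greater than $p/2$ is the prime $p_{m+1}$ with $p_m<p/2<p_{m+1}$. *)

From mathcomp Require Import all_boot.
Set Implicit Arguments. Unset Strict Implicit. Unset Printing Implicit Defensive.

Definition composite (k : nat) : bool := (1 < k) && ~~ prime k.

Definition is_least_prime_above_half (p q : nat) : Prop :=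
  [/\ prime q, p < 2 * q & forall r, prime r -> p < 2 * r -> q <= r].

Definition is_next_prime (p pn1 : nat) : Prop :=
  [/\ prime pn1, p < pn1 & forall r, prime r -> p < r -> pn1 <= r].

From mathcomp Require Import all_boot.
From mathcomp Require Import zify.

(* The integers in [(p+1)/2, (pn1-1)/2] are all composite exactly when the
   least prime q above p/2 lies beyond that range, i.e. when pn1 < 2q (pn1 and
   p being odd); and a prime in (p, 2q) exists exactly when the next prime pn1
   after p is already smaller than 2q. *)

Lemma composite_range_least_prime (a b q : nat) :
  1 < a -> prime q -> a <= q -> (forall r, prime r -> a <= r -> q <= r) ->
  (forall k, a <= k <= b -> composite k) <-> b < q.
Proof.
move=> a_gt1 q_prime a_le_q q_min; split.
- move=> all_comp; rewrite ltnNge; apply/negP => q_le_b.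
  have /andP[_] := all_comp q (introT andP (conj a_le_q q_le_b)).
  by rewrite q_prime.
- move=> b_lt_q k /andP[a_le_k k_le_b]; rewrite /composite.
  apply/andP; split; first exact: leq_trans a_gt1 a_le_k.
  apply/negP => k_prime.
  by have := q_min k k_prime a_le_k; lia.
Qed.

Lemma exists_prime_between_next (m p pn1 : nat) :
  is_next_prime p pn1 ->
  (exists r, [/\ prime r, p < r & r < m]) <-> pn1 < m.
Proof.
case=> pn1_prime p_lt_pn1 pn1_min; split.
- by case=> r [r_prime p_lt_r r_lt_m]; exact: leq_ltn_trans (pn1_min r _ _) _.
- by move=> pn1_lt_m; exists pn1.
Qed.

Lemma half_succ_leq_odd (p r : nat) : odd p -> ((p + 1) %/ 2 <= r) = (p < 2 * r).
Proof. by move=> odd_p; apply/idP/idP; lia. Qed.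

Lemma half_pred_ltn_odd (n q : nat) : odd n -> ((n - 1) %/ 2 < q) = (n < 2 * q).
Proof. by move=> odd_n; apply/idP/idP; lia. Qed.

Theorem lemma1 (p q pn1 : nat) :
  prime p -> odd p ->
  is_least_prime_above_half p q ->
  is_next_prime p pn1 ->
  ((forall k, (p + 1) %/ 2 <= k <= (pn1 - 1) %/ 2 -> composite k) <->
   (exists r, [/\ prime r, p < r & r < 2 * q])).
Proof.
move=> p_prime odd_p [q_prime p_lt_2q q_min] next_pn1.
have p_gt2 : 2 < p := odd_prime_gt2 odd_p p_prime.
have odd_pn1 : odd pn1.
  case: next_pn1 => pn1_prime p_lt_pn1 _.
  by case: (even_prime pn1_prime) => // pn1_2; lia.
rewrite (exists_prime_between_next (2 * q) _ _ next_pn1) -half_pred_ltn_odd //.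
apply: composite_range_least_prime => //; first lia.
- by rewrite half_succ_leq_odd.
- by move=> r r_prime; rewrite half_succ_leq_odd // => /(q_min r r_prime).
Qed.
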